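(* Let $\Omega\subset\mathbb{C}$ be a simply connected domain, $(g,\mathcal{P},\mathcal{Q})$ a Weierstrass data of the first kind on $\Omega$, and $\lambda\in\mathbb{R}$ with $1+i\lambda g(z)\neq0$ for all $z\in\Omega$. Let $g_\lambda:=\frac{g}{1+i\lambda g}$, $\mathcal{P}_\lambda:=\mathcal{P}$, and let $\mathcal{Q}_\lambda:\Omega\to\mathbb{R}$ be a $\mathcal{C}^2$ function with $(\mathcal{Q}_\lambda)_z=\left(\frac1g+i\lambda\right)(g\mathcal{Q}_z-i\lambda\mathcal{P}_z)$ (so that $(g_\lambda,\mathcal{P}_\lambda,\mathcal{Q}_\lambda)$ is again a Weierstrass data of the first kind). Then $$\mathbf{X}_{[g_\lambda,\mathcal{P}_\lambda,\mathcal{Q}_\lambda]}=L_\lambda\,\mathbf{X}_{[g,\mathcal{P},\mathcal{Q}]}$$ up to an additive constant vector, where $L_\lambda$ is the linear map of $\mathbb{L}^4$ with matrix $$L_\lambda=\begin{bmatrix}1&0&0&0\\0&1&-\lambda&-\lambda\\0&\lambda&1-\frac{\lambda^2}{2}&-\frac{\lambda^2}{2}\\0&-\lambda&\frac{\lambda^2}{2}&1+\frac{\lambda^2}{2}\end{bmatrix}.$$ In particular the two marginally trapped surfaces are congruent in $\mathbb{L}^4$.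
   Context: $\Omega\subset\mathbb{R}^2\equiv\mathbb{C}$ has complex coordinate $z=u+iv$, and $\partial_z=\frac12(\partial_u-i\partial_v)$, $\partial_{\overline z}=\frac12(\partial_u+i\partial_v)$; subscripts denote partial derivatives. $\mathbb{L}^4$ is $\mathbb{R}^4$ with the Lorentzian metric $\langle x,y\rangle=x_1y_1+x_2y_2+x_3y_3-x_4y_4$. A Weierstrass data of the first kind on $\Omega$ is a triple $(g,\mathcal{P},\mathcal{Q})$ where $g:\Omega\to\mathbb{C}\setminus\{0\}$ and $\mathcal{P},\mathcal{Q}:\Omega\to\mathbb{R}$ are $\mathcal{C}^2$, satisfying $g_{\overline z}=0$, $\mathcal{P}_{z\overline z}=|g|^2\mathcal{Q}_{z\overline z}$, and $\mathcal{P}_z-|g|^2\mathcal{Q}_z\neq0$ at every point of $\Omega$. For such data, $\mathbf{X}_{[g,\mathcal{P},\mathcal{Q}]}:\Omega\to\mathbb{R}^4$ denotes any map (determined up to an additive constant vector) with $\mathbf{X}_z=\mathcal{P}_z\,(1/g,\ i/g,\ 1,\ 1)^T+\mathcal{Q}_z\,(g,\ -ig,\ -1,\ 1)^T$; it is a conformal parameterization of a marginally trapped surface in $\mathbb{L}^4$. *)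

From Stdlib Require Import Reals Lra.
From Coquelicot Require Import Coquelicot.
Open Scope R_scope.

(** Points of Omega ⊂ R^2 ≡ C are z = (u, v) : C = R * R. *)

Definition du (f : C -> R) (z : C) : R := Derive (fun t => f (t, snd z)) (fst z).
Definition dv (f : C -> R) (z : C) : R := Derive (fun t => f (fst z, t)) (snd z).

Definition C1_on (Om : C -> Prop) (f : C -> R) : Prop :=
  forall z, Om z ->
    ex_derive (fun t => f (t, snd z)) (fst z) /\
    ex_derive (fun t => f (fst z, t)) (snd z) /\
    continuous (du f) z /\ continuous (dv f) z.

Definition C2_on (Om : C -> Prop) (f : C -> R) : Prop :=
  C1_on Om f /\ C1_on Om (du f) /\ C1_on Om (dv f).

Definition C2c_on (Om : C -> Prop) (F : C -> C) : Prop :=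
  C2_on Om (fun w => Re (F w)) /\ C2_on Om (fun w => Im (F w)).

Definition duC (F : C -> C) (z : C) : C :=
  (du (fun w => Re (F w)) z, du (fun w => Im (F w)) z).
Definition dvC (F : C -> C) (z : C) : C :=
  (dv (fun w => Re (F w)) z, dv (fun w => Im (F w)) z).

Definition dz (F : C -> C) (z : C) : C := (/ 2 * (duC F z - Ci * dvC F z))%C.
Definition dzbar (F : C -> C) (z : C) : C := (/ 2 * (duC F z + Ci * dvC F z))%C.

Definition cplx (f : C -> R) : C -> C := fun w => RtoC (f w).
Definition dzR (f : C -> R) : C -> C := dz (cplx f).

Definition dzzbarR (f : C -> R) : C -> C := dzbar (dzR f).

Definition WData1 (Om : C -> Prop) (g : C -> C) (P Q : C -> R) : Prop :=
  C2c_on Om g /\ C2_on Om P /\ C2_on Om Q /\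
  (forall z, Om z -> g z <> 0%C) /\
  (forall z, Om z -> dzbar g z = 0%C) /\
  (forall z, Om z -> dzzbarR P z = (RtoC (Cmod (g z) ^ 2) * dzzbarR Q z)%C) /\
  (forall z, Om z -> (dzR P z - RtoC (Cmod (g z) ^ 2) * dzR Q z)%C <> 0%C).

(** Maps Omega -> R^4 are represented as X : nat -> C -> R, the coordinates
    being X 0, X 1, X 2, X 3 (other indices are irrelevant). *)

Definition wP (w : C) (i : nat) : C :=
  match i with
  | 0%nat => (/ w)%C | 1%nat => (Ci / w)%C | 2%nat => 1%C | _ => 1%C
  end.
Definition wQ (w : C) (i : nat) : C :=
  match i with
  | 0%nat => w | 1%nat => (- (Ci * w))%C | 2%nat => (- 1)%C | _ => 1%C
  end.

(** X is a (choice of) X_{[g,P,Q]} on Omega: a C^1 map with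
    X_z = P_z (1/g, i/g, 1, 1)^T + Q_z (g, -ig, -1, 1)^T. *)
Definition IsXmap (Om : C -> Prop) (g : C -> C) (P Q : C -> R)
    (X : nat -> C -> R) : Prop :=
  (forall i, (i < 4)%nat -> C1_on Om (X i)) /\
  (forall z i, Om z -> (i < 4)%nat ->
     dzR (X i) z = (dzR P z * wP (g z) i + dzR Q z * wQ (g z) i)%C).

Definition path_in (Om : C -> Prop) (gam : R -> C) : Prop :=
  forall t, 0 <= t <= 1 -> continuous gam t /\ Om (gam t).

Definition path_connected (Om : C -> Prop) : Prop :=
  forall a b, Om a -> Om b ->
    exists gam, path_in Om gam /\ gam 0 = a /\ gam 1 = b.

Definition loops_contractible (Om : C -> Prop) : Prop :=
  forall gam, path_in Om gam -> gam 0 = gam 1 ->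
    exists H : R -> R -> C,
      (forall s t, 0 <= s <= 1 -> 0 <= t <= 1 ->
         continuous (fun p : R * R => H (fst p) (snd p)) (s, t) /\ Om (H s t)) /\
      (forall t, 0 <= t <= 1 -> H 0 t = gam t /\ H 1 t = gam 0) /\
      (forall s, 0 <= s <= 1 -> H s 0 = gam 0 /\ H s 1 = gam 0).

Definition simply_connected_domain (Om : C -> Prop) : Prop :=
  open Om /\ (exists z, Om z) /\ path_connected Om /\ loops_contractible Om.

Definition Lmat (lam : R) (i j : nat) : R :=
  match i, j with
  | O, O => 1 | O, _ => 0
  | S O, O => 0 | S O, S O => 1 | S O, _ => - lam
  | S (S O), O => 0 | S (S O), S O => lam
  | S (S O), S (S O) => 1 - lam ^ 2 / 2 | S (S O), _ => - (lam ^ 2 / 2)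
  | _, O => 0 | _, S O => - lam | _, S (S O) => lam ^ 2 / 2
  | _, _ => 1 + lam ^ 2 / 2
  end.

Definition eta (i j : nat) : R :=
  if Nat.eqb i j then (if Nat.eqb i 3 then -1 else 1) else 0.

Definition applyL (lam : R) (X : nat -> C -> R) (i : nat) (z : C) : R :=
  sum_f_R0 (fun j => Lmat lam i j * X j z) 3.

From Stdlib Require Import Reals Lra Lia FunctionalExtensionality Classical.
From Coquelicot Require Import Coquelicot.
Open Scope R_scope.

(* With P fixed and (g, Q) replaced by (g / (1 + i lam g), Q_lam), a direct computation shows that
   the coefficient vector P_z w_P(g_lam) + (Q_lam)_z w_Q(g_lam) is L_lam applied to
   P_z w_P(g) + Q_z w_Q(g).  So each coordinate of Y - L_lam X is a real function with vanishing
   z-derivative, i.e. with vanishing gradient, hence constant on the (path-)connected domain.  The data conditions transfer because g_lam and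
   1/g + i lam are holomorphic, and L_lam^T eta L_lam = eta is a finite computation. *)

(* [axis_pt true z] is the horizontal line through [z], [axis_pt false z] the vertical one, so
   [pderive true f] and [pderive false f] are convertible to [du f] and [dv f]. *)
Definition axis_pt (d : bool) (z : C) (t : R) : C := if d then (t, snd z) else (fst z, t).
Definition axis_coord (d : bool) (z : C) : R := if d then fst z else snd z.
Definition pderive (d : bool) (f : C -> R) (z : C) : R :=
  Derive (fun t => f (axis_pt d z t)) (axis_coord d z).
Definition ex_pderive (d : bool) (f : C -> R) (z : C) : Prop :=
  ex_derive (fun t => f (axis_pt d z t)) (axis_coord d z).

Lemma axis_pt_coord d z : axis_pt d z (axis_coord d z) = z.
Proof. destruct d, z; reflexivity. Qed.
Lemma axis_pt_pt d z t s : axis_pt d (axis_pt d z t) s = axis_pt d z s.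
Proof. destruct d; reflexivity. Qed.
Lemma axis_coord_pt d z t : axis_coord d (axis_pt d z t) = t.
Proof. destruct d; reflexivity. Qed.

Lemma ball_C (x y : C) (e : R) :
  ball x e y <-> Rabs (fst y - fst x) < e /\ Rabs (snd y - snd x) < e.
Proof. destruct x, y; reflexivity. Qed.

Lemma locally_axis_pt (P : C -> Prop) d z :
  locally z P -> locally (axis_coord d z) (fun t => P (axis_pt d z t)).
Proof.
  intros [e He]. exists e. intros t Ht. apply He, ball_C. change (Rabs (t - axis_coord d z) < e) in Ht.
  pose proof (cond_pos e). destruct d, z; simpl in *; rewrite Rminus_diag, Rabs_R0; tauto.
Qed.

Lemma locally_of_open (Om P : C -> Prop) z :
  open Om -> Om z -> (forall y, Om y -> P y) -> locally z P.
Proof. intros HO Hz HP. eapply filter_imp; [exact HP|]. apply HO, Hz. Qed.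

Lemma C1_on_iff Om f :
  C1_on Om f <-> forall z, Om z -> forall d, ex_pderive d f z /\ continuous (pderive d f) z.
Proof.
  split.
  - intros H z Hz d. destruct (H z Hz) as (?&?&?&?). destruct d; split; assumption.
  - intros H z Hz. destruct (H z Hz true), (H z Hz false). repeat split; assumption.
Qed.

Lemma C2_on_iff Om f : C2_on Om f <-> C1_on Om f /\ forall d, C1_on Om (pderive d f).
Proof.
  split.
  - intros (?&?&?). split; [assumption|]. intros []; assumption.
  - intros (H1&H2). exact (conj H1 (conj (H2 true) (H2 false))).
Qed.

Lemma C1_ex_pderive Om f z d : C1_on Om f -> Om z -> ex_pderive d f z.
Proof. intros H Hz. exact (proj1 (proj1 (C1_on_iff Om f) H z Hz d)). Qed.
Lemma C1_continuous_pderive Om f z d : C1_on Om f -> Om z -> continuous (pderive d f) z.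
Proof. intros H Hz. exact (proj2 (proj1 (C1_on_iff Om f) H z Hz d)). Qed.
Lemma C2_C1 Om f : C2_on Om f -> C1_on Om f.
Proof. intros H; exact (proj1 H). Qed.
Lemma C2_C1_pderive Om f d : C2_on Om f -> C1_on Om (pderive d f).
Proof. intros H; exact (proj2 (proj1 (C2_on_iff Om f) H) d). Qed.

Lemma is_derive_axis Om f d z t : C1_on Om f -> Om (axis_pt d z t) ->
  is_derive (fun s => f (axis_pt d z s)) t (pderive d f (axis_pt d z t)).
Proof.
  intros H Ht. pose proof (C1_ex_pderive Om f _ d H Ht) as E.
  unfold ex_pderive, pderive in *. rewrite axis_coord_pt in *.
  assert (Hext : forall s, f (axis_pt d (axis_pt d z t) s) = f (axis_pt d z s))
    by (intro; rewrite axis_pt_pt; reflexivity).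
  rewrite (Derive_ext _ _ _ Hext). apply Derive_correct. exact (ex_derive_ext _ _ _ Hext E).
Qed.

Lemma MVT_axis Om f d z a b : C1_on Om f ->
  (forall t, Rmin a b <= t <= Rmax a b -> Om (axis_pt d z t)) ->
  exists c, Rmin a b <= c <= Rmax a b /\
    f (axis_pt d z b) - f (axis_pt d z a) = pderive d f (axis_pt d z c) * (b - a).
Proof.
  intros H Hin.
  apply (MVT_gen (fun s => f (axis_pt d z s)) a b (fun c => pderive d f (axis_pt d z c))).
  - intros x Hx. apply (is_derive_axis Om), Hin; [assumption|lra].
  - intros x Hx. apply continuity_pt_filterlim.
    apply (ex_derive_continuous (K := R_AbsRing) (V := R_NormedModule)).
    eexists. apply (is_derive_axis Om); auto.
Qed.

Lemma Rabs_between a b t : Rmin a b <= t <= Rmax a b -> Rabs (t - a) <= Rabs (b - a).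
Proof. unfold Rmin, Rmax; destruct (Rle_dec a b); intros; split_Rabs; lra. Qed.

(* Continuity in [v] at the base point, plus a locally bounded [u]-derivative (mean value theorem). *)
Lemma C1_continuous Om f z : open Om -> C1_on Om f -> Om z -> continuous f z.
Proof.
  intros HO H Hz. apply filterlim_locally. intros eps.
  destruct (HO z Hz) as [r Hr].
  destruct (proj1 (filterlim_locally _ _) (C1_continuous_pderive Om f z true H Hz)
              (mkposreal 1 Rlt_0_1)) as [r1 Hr1].
  destruct (proj1 (filterlim_locally _ _)
              (ex_derive_continuous _ _ (C1_ex_pderive Om f z false H Hz)) (pos_div_2 eps))
    as [r2 Hr2].
  set (M := Rabs (pderive true f z) + 1).
  assert (HM : 0 < M) by (unfold M; pose proof (Rabs_pos (pderive true f z)); lra).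
  set (del := Rmin (Rmin r r1) (Rmin r2 (eps / (2 * M)))).
  assert (Hdel : 0 < del).
  { pose proof (cond_pos r); pose proof (cond_pos r1); pose proof (cond_pos r2);
      pose proof (cond_pos eps).
    repeat apply Rmin_pos; try assumption. apply Rdiv_lt_0_compat; lra. }
  exists (mkposreal _ Hdel). intros w Hw. apply ball_C in Hw. cbn [pos] in Hw.
  destruct z as [u v], w as [u' v']. cbn [fst snd] in *. destruct Hw as [Hw1 Hw2].
  pose proof (Rmin_l (Rmin r r1) (Rmin r2 (eps / (2 * M)))).
  pose proof (Rmin_r (Rmin r r1) (Rmin r2 (eps / (2 * M)))).
  pose proof (Rmin_l r r1). pose proof (Rmin_r r r1).
  pose proof (Rmin_l r2 (eps / (2 * M))). pose proof (Rmin_r r2 (eps / (2 * M))).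
  fold del in H0, H1. change (Rabs (u' - u) < del) in Hw1. change (Rabs (v' - v) < del) in Hw2.
  destruct (MVT_axis Om f true (u', v') u u' H) as (c & Hc & Hmvt).
  { intros t Ht. apply Hr, ball_C. pose proof (Rabs_between u u' t Ht). cbn. split; lra. }
  cbn in Hmvt. pose proof (Rabs_between u u' c Hc).
  assert (Hbound : Rabs (pderive true f (c, v')) < M).
  { assert (B : ball (pderive true f (u, v)) 1 (pderive true f (c, v')))
      by (apply Hr1, ball_C; cbn; split; lra).
    change (Rabs (pderive true f (c, v') - pderive true f (u, v)) < 1) in B.
    unfold M. split_Rabs; lra. }
  assert (Hvert : Rabs (f (u, v') - f (u, v)) < eps / 2).
  { apply (Hr2 v'). change (Rabs (v' - v) < r2). lra. }
  assert (Hhor : Rabs (f (u', v') - f (u, v')) <= eps / 2).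
  { rewrite Hmvt, Rabs_mult.
    apply Rle_trans with (M * (eps / (2 * M))); [|right; field; lra].
    apply Rmult_le_compat; try apply Rabs_pos; lra. }
  change (Rabs (f (u', v') - f (u, v)) < eps).
  replace (f (u', v') - f (u, v)) with ((f (u', v') - f (u, v')) + (f (u, v') - f (u, v))) by ring.
  eapply Rle_lt_trans; [apply Rabs_triang|]. lra.
Qed.

Section PointwiseRules.
Variables (d : bool) (f g : C -> R) (w : C).

Lemma ex_pderive_plus : ex_pderive d f w -> ex_pderive d g w -> ex_pderive d (fun x => f x + g x) w.
Proof. apply (ex_derive_plus (fun t => f (axis_pt d w t)) (fun t => g (axis_pt d w t))). Qed.
Lemma pderive_plus : ex_pderive d f w -> ex_pderive d g w ->
  pderive d (fun x => f x + g x) w = pderive d f w + pderive d g w.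
Proof. apply (Derive_plus (fun t => f (axis_pt d w t)) (fun t => g (axis_pt d w t))). Qed.
Lemma ex_pderive_mult : ex_pderive d f w -> ex_pderive d g w -> ex_pderive d (fun x => f x * g x) w.
Proof. apply (ex_derive_mult (fun t => f (axis_pt d w t)) (fun t => g (axis_pt d w t))). Qed.
Lemma pderive_mult : ex_pderive d f w -> ex_pderive d g w ->
  pderive d (fun x => f x * g x) w = pderive d f w * g w + f w * pderive d g w.
Proof.
  intros. unfold pderive. rewrite (Derive_mult (fun t => f (axis_pt d w t))) by assumption.
  rewrite axis_pt_coord. reflexivity.
Qed.
Lemma ex_pderive_opp : ex_pderive d f w -> ex_pderive d (fun x => - f x) w.
Proof. apply (ex_derive_opp (fun t => f (axis_pt d w t))). Qed.
Lemma pderive_opp : pderive d (fun x => - f x) w = - pderive d f w.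
Proof. apply (Derive_opp (fun t => f (axis_pt d w t))). Qed.
Lemma ex_pderive_scal a : ex_pderive d f w -> ex_pderive d (fun x => a * f x) w.
Proof. apply (ex_derive_scal (fun t => f (axis_pt d w t))). Qed.
Lemma pderive_scal a : pderive d (fun x => a * f x) w = a * pderive d f w.
Proof. apply (Derive_scal (fun t => f (axis_pt d w t))). Qed.
Lemma ex_pderive_inv : ex_pderive d f w -> f w <> 0 -> ex_pderive d (fun x => / f x) w.
Proof.
  intros. apply (ex_derive_inv (fun t => f (axis_pt d w t))); [|rewrite axis_pt_coord]; assumption.
Qed.
Lemma pderive_inv : ex_pderive d f w -> f w <> 0 ->
  pderive d (fun x => / f x) w = - pderive d f w / (f w) ^ 2.
Proof.
  intros. unfold pderive. rewrite (Derive_inv (fun t => f (axis_pt d w t))); rewrite ?axis_pt_coord;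
    trivial.
Qed.
Lemma ex_pderive_const c : ex_pderive d (fun _ => c) w.
Proof. unfold ex_pderive; apply ex_derive_const. Qed.
Lemma pderive_const c : pderive d (fun _ => c) w = 0.
Proof. unfold pderive; apply Derive_const. Qed.
Lemma ex_pderive_ext : (forall x, f x = g x) -> ex_pderive d g w -> ex_pderive d f w.
Proof. intros E. replace f with g; [trivial|]. apply functional_extensionality; auto. Qed.
Lemma pderive_ext : (forall x, f x = g x) -> pderive d f w = pderive d g w.
Proof. intros E. replace f with g; [trivial|]. apply functional_extensionality; auto. Qed.
End PointwiseRules.

Section ContinuityR.
Variables (f g : C -> R) (z : C).
Lemma continuous_Rplus_fun : continuous f z -> continuous g z -> continuous (fun x => f x + g x) z.
Proof. apply (continuous_plus (K := R_AbsRing) (V := R_NormedModule)). Qed.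
Lemma continuous_Rmult_fun : continuous f z -> continuous g z -> continuous (fun x => f x * g x) z.
Proof. apply (continuous_mult (K := R_AbsRing)). Qed.
Lemma continuous_Ropp_fun : continuous f z -> continuous (fun x => - f x) z.
Proof. apply (continuous_opp (K := R_AbsRing) (V := R_NormedModule)). Qed.
Lemma continuous_Rinv_fun : continuous f z -> f z <> 0 -> continuous (fun x => / f x) z.
Proof. intros. apply (continuous_comp f Rinv); [|apply continuous_Rinv]; assumption. Qed.
End ContinuityR.

Section Closure.
Variables (Om : C -> Prop) (HO : open Om).

Lemma pderive_ext_on f g d w : (forall y, Om y -> f y = g y) -> Om w ->
  pderive d f w = pderive d g w.
Proof.
  intros E Hw. apply Derive_ext_loc, (locally_axis_pt (fun y => f y = g y)).
  apply (locally_of_open Om); auto.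
Qed.

Lemma C1_on_intro h (D : bool -> C -> R) :
  (forall y d, Om y -> ex_pderive d h y /\ pderive d h y = D d y) ->
  (forall y d, Om y -> continuous (D d) y) -> C1_on Om h.
Proof.
  intros HD Hc. apply C1_on_iff. intros z Hz d. split; [apply HD, Hz|].
  apply (continuous_ext_loc _ (D d)); [|apply Hc, Hz].
  apply (locally_of_open Om); auto. intros y Hy. symmetry. apply HD, Hy.
Qed.

Lemma C1_ext f g : (forall w, Om w -> f w = g w) -> C1_on Om g -> C1_on Om f.
Proof.
  intros E Hg. apply (C1_on_intro f (fun d => pderive d g)).
  - intros y d Hy. split; [|apply pderive_ext_on; assumption].
    apply (ex_derive_ext_loc (fun t => g (axis_pt d y t))).
    + apply (locally_axis_pt (fun x => g x = f x)), (locally_of_open Om); auto.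
      intros x Hx. symmetry. auto.
    + apply (C1_ex_pderive Om); assumption.
  - intros y d Hy. apply (C1_continuous_pderive Om); assumption.
Qed.

Lemma C1_const c : C1_on Om (fun _ => c).
Proof.
  apply (C1_on_intro _ (fun _ _ => 0)).
  - intros. split; [apply ex_pderive_const|apply pderive_const].
  - intros. apply continuous_const.
Qed.

Lemma C1_plus f g : C1_on Om f -> C1_on Om g -> C1_on Om (fun x => f x + g x).
Proof.
  intros Hf Hg. apply (C1_on_intro _ (fun d y => pderive d f y + pderive d g y)).
  - intros y d Hy. pose proof (C1_ex_pderive Om f y d Hf Hy). pose proof (C1_ex_pderive Om g y d Hg Hy).
    split; [apply ex_pderive_plus|apply pderive_plus]; assumption.
  - intros y d Hy. apply continuous_Rplus_fun; apply (C1_continuous_pderive Om); assumption.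
Qed.

Lemma C1_mult f g : C1_on Om f -> C1_on Om g -> C1_on Om (fun x => f x * g x).
Proof.
  intros Hf Hg.
  apply (C1_on_intro _ (fun d y => pderive d f y * g y + f y * pderive d g y)).
  - intros y d Hy. pose proof (C1_ex_pderive Om f y d Hf Hy). pose proof (C1_ex_pderive Om g y d Hg Hy).
    split; [apply ex_pderive_mult|apply pderive_mult]; assumption.
  - intros y d Hy. apply continuous_Rplus_fun; apply continuous_Rmult_fun;
      solve [apply (C1_continuous_pderive Om); assumption | apply (C1_continuous Om); assumption].
Qed.

Lemma C1_opp f : C1_on Om f -> C1_on Om (fun x => - f x).
Proof.
  intros Hf. apply (C1_on_intro _ (fun d y => - pderive d f y)).
  - intros y d Hy. split; [apply ex_pderive_opp, (C1_ex_pderive Om); assumption|apply pderive_opp].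
  - intros y d Hy. apply continuous_Ropp_fun, (C1_continuous_pderive Om); assumption.
Qed.

Lemma C1_inv f : C1_on Om f -> (forall w, Om w -> f w <> 0) -> C1_on Om (fun x => / f x).
Proof.
  intros Hf Hn. apply (C1_on_intro _ (fun d y => - pderive d f y * / (f y * f y))).
  - intros y d Hy. pose proof (C1_ex_pderive Om f y d Hf Hy). split.
    + apply ex_pderive_inv; auto.
    + rewrite pderive_inv by auto. unfold Rdiv. simpl. rewrite Rmult_1_r. reflexivity.
  - intros y d Hy. pose proof (C1_continuous Om f y HO Hf Hy).
    apply continuous_Rmult_fun.
    + apply continuous_Ropp_fun, (C1_continuous_pderive Om); assumption.
    + apply continuous_Rinv_fun; [apply continuous_Rmult_fun; assumption|].
      apply Rmult_integral_contrapositive_currified; auto.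
Qed.

Lemma C2_ext f g : (forall w, f w = g w) -> C2_on Om g -> C2_on Om f.
Proof. intros E H. replace f with g; [trivial|]. apply functional_extensionality; auto. Qed.

Lemma C2_intro h (D : bool -> C -> R) : C1_on Om h ->
  (forall y d, Om y -> pderive d h y = D d y) -> (forall d, C1_on Om (D d)) -> C2_on Om h.
Proof.
  intros H1 HD HC. apply C2_on_iff. split; [assumption|]. intro d.
  apply (C1_ext _ (D d)); [intros; apply HD; assumption|apply HC].
Qed.

Lemma C2_const c : C2_on Om (fun _ => c).
Proof.
  apply (C2_intro _ (fun _ _ => 0)); [apply C1_const|intros; apply pderive_const|intros; apply C1_const].
Qed.

Lemma C2_plus f g : C2_on Om f -> C2_on Om g -> C2_on Om (fun x => f x + g x).
Proof.
  intros Hf Hg. apply (C2_intro _ (fun d y => pderive d f y + pderive d g y)).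
  - apply C1_plus; apply C2_C1; assumption.
  - intros y d Hy. apply pderive_plus; apply (C1_ex_pderive Om), Hy; apply C2_C1; assumption.
  - intro d. apply C1_plus; apply C2_C1_pderive; assumption.
Qed.

Lemma C2_mult f g : C2_on Om f -> C2_on Om g -> C2_on Om (fun x => f x * g x).
Proof.
  intros Hf Hg. apply (C2_intro _ (fun d y => pderive d f y * g y + f y * pderive d g y)).
  - apply C1_mult; apply C2_C1; assumption.
  - intros y d Hy. apply pderive_mult; apply (C1_ex_pderive Om), Hy; apply C2_C1; assumption.
  - intro d. apply C1_plus; apply C1_mult; auto using C2_C1, C2_C1_pderive.
Qed.

Lemma C2_opp f : C2_on Om f -> C2_on Om (fun x => - f x).
Proof.
  intros Hf. apply (C2_intro _ (fun d y => - pderive d f y)).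
  - apply C1_opp, C2_C1, Hf.
  - intros. apply pderive_opp.
  - intro d. apply C1_opp, C2_C1_pderive, Hf.
Qed.

Lemma C2_inv f : C2_on Om f -> (forall w, Om w -> f w <> 0) -> C2_on Om (fun x => / f x).
Proof.
  intros Hf Hn. apply (C2_intro _ (fun d y => - (pderive d f y * (/ f y * / f y)))).
  - apply C1_inv; [apply C2_C1|]; assumption.
  - intros y d Hy. rewrite pderive_inv by (auto; apply (C1_ex_pderive Om), Hy; apply C2_C1, Hf).
    field. auto.
  - intro d. apply C1_opp, C1_mult; [apply C2_C1_pderive, Hf|].
    apply C1_mult; apply C1_inv; auto using C2_C1.
Qed.

Lemma C2c_const (c : C) : C2c_on Om (fun _ => c).
Proof. split; apply C2_const. Qed.

Lemma C2c_plus (F G : C -> C) : C2c_on Om F -> C2c_on Om G -> C2c_on Om (fun x => (F x + G x)%C).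
Proof.
  intros [F1 F2] [G1 G2]. split.
  - apply (C2_ext _ (fun x => Re (F x) + Re (G x))); [reflexivity|]. apply C2_plus; auto.
  - apply (C2_ext _ (fun x => Im (F x) + Im (G x))); [reflexivity|]. apply C2_plus; auto.
Qed.

Lemma C2c_mult (F G : C -> C) : C2c_on Om F -> C2c_on Om G -> C2c_on Om (fun x => (F x * G x)%C).
Proof.
  intros [F1 F2] [G1 G2]. split.
  - apply (C2_ext _ (fun x => Re (F x) * Re (G x) + - (Im (F x) * Im (G x)))); [reflexivity|].
    apply C2_plus; [|apply C2_opp]; apply C2_mult; auto.
  - apply (C2_ext _ (fun x => Re (F x) * Im (G x) + Im (F x) * Re (G x))); [reflexivity|].
    apply C2_plus; apply C2_mult; auto.
Qed.

Lemma Cnorm2_neq_0 (x : C) : x <> 0%C -> Re x * Re x + Im x * Im x <> 0.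
Proof.
  intros H E. apply H. destruct x as [a b]. simpl in E.
  assert (a = 0) by nra. assert (b = 0) by nra. subst. reflexivity.
Qed.

Lemma Re_Cinv (x : C) : Re (/ x)%C = Re x * / (Re x * Re x + Im x * Im x).
Proof. destruct x as [a b]. unfold Cinv, Re, Im. cbn [fst snd]. unfold Rdiv. repeat f_equal; ring. Qed.
Lemma Im_Cinv (x : C) : Im (/ x)%C = - Im x * / (Re x * Re x + Im x * Im x).
Proof. destruct x as [a b]. unfold Cinv, Re, Im. cbn [fst snd]. unfold Rdiv. repeat f_equal; ring. Qed.

Lemma C2c_inv (F : C -> C) : C2c_on Om F -> (forall w, Om w -> F w <> 0%C) ->
  C2c_on Om (fun x => (/ F x)%C).
Proof.
  intros [F1 F2] Hn.
  assert (N : C2_on Om (fun x => / (Re (F x) * Re (F x) + Im (F x) * Im (F x)))).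
  { apply C2_inv; [apply C2_plus; apply C2_mult; auto|]. intros; apply Cnorm2_neq_0; auto. }
  split.
  - apply (C2_ext _ _ (fun x => Re_Cinv (F x))). apply C2_mult; auto.
  - apply (C2_ext _ _ (fun x => Im_Cinv (F x))). apply C2_mult; auto. apply C2_opp; auto.
Qed.

End Closure.

Definition ex_pderiveC (d : bool) (F : C -> C) (z : C) : Prop :=
  ex_pderive d (fun w => Re (F w)) z /\ ex_pderive d (fun w => Im (F w)) z.
Definition pderiveC (d : bool) (F : C -> C) (z : C) : C :=
  (pderive d (fun w => Re (F w)) z, pderive d (fun w => Im (F w)) z).
Definition ex_partialsC (F : C -> C) (z : C) : Prop := forall d, ex_pderiveC d F z.

Lemma dzbar_pderiveC F z : dzbar F z = (/ 2 * (pderiveC true F z + Ci * pderiveC false F z))%C.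
Proof. reflexivity. Qed.

Lemma ex_pderiveC_const d (c : C) w : ex_pderiveC d (fun _ => c) w.
Proof. split; apply ex_pderive_const. Qed.
Lemma pderiveC_const d (c : C) w : pderiveC d (fun _ => c) w = 0%C.
Proof. unfold pderiveC. rewrite !pderive_const. reflexivity. Qed.

Section PointwiseRulesC.
Variables (d : bool) (F G : C -> C) (w : C).
Hypotheses (HF : ex_pderiveC d F w) (HG : ex_pderiveC d G w).

Lemma ex_pderiveC_plus : ex_pderiveC d (fun x => F x + G x)%C w.
Proof.
  destruct HF, HG. split.
  - apply (ex_pderive_ext _ _ (fun x => Re (F x) + Re (G x))); [reflexivity|].
    apply ex_pderive_plus; auto.
  - apply (ex_pderive_ext _ _ (fun x => Im (F x) + Im (G x))); [reflexivity|].
    apply ex_pderive_plus; auto.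
Qed.

Lemma pderiveC_plus : pderiveC d (fun x => F x + G x)%C w = (pderiveC d F w + pderiveC d G w)%C.
Proof.
  destruct HF, HG. unfold pderiveC.
  rewrite (pderive_ext _ _ (fun x => Re (F x) + Re (G x))) by reflexivity.
  rewrite (pderive_ext _ (fun x => Im _) (fun x => Im (F x) + Im (G x))) by reflexivity.
  rewrite !pderive_plus by auto. reflexivity.
Qed.

Lemma ex_pderiveC_mult : ex_pderiveC d (fun x => F x * G x)%C w.
Proof.
  destruct HF, HG. split.
  - apply (ex_pderive_ext _ _ (fun x => Re (F x) * Re (G x) + - (Im (F x) * Im (G x))));
      [reflexivity|].
    apply ex_pderive_plus; [|apply ex_pderive_opp]; apply ex_pderive_mult; auto.
  - apply (ex_pderive_ext _ _ (fun x => Re (F x) * Im (G x) + Im (F x) * Re (G x))); [reflexivity|].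
    apply ex_pderive_plus; apply ex_pderive_mult; auto.
Qed.

Lemma pderiveC_mult :
  pderiveC d (fun x => F x * G x)%C w = (pderiveC d F w * G w + F w * pderiveC d G w)%C.
Proof.
  destruct HF as [F1 F2], HG as [G1 G2]. unfold pderiveC.
  rewrite (pderive_ext _ _ (fun x => Re (F x) * Re (G x) + - (Im (F x) * Im (G x)))) by reflexivity.
  rewrite (pderive_ext _ (fun x => Im _) (fun x => Re (F x) * Im (G x) + Im (F x) * Re (G x)))
    by reflexivity.
  rewrite (pderive_plus _ _ _ _ (ex_pderive_mult _ _ _ _ F1 G1)
             (ex_pderive_opp _ _ _ (ex_pderive_mult _ _ _ _ F2 G2))).
  rewrite (pderive_plus _ _ _ _ (ex_pderive_mult _ _ _ _ F1 G2) (ex_pderive_mult _ _ _ _ F2 G1)).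
  rewrite pderive_opp, (pderive_mult _ _ _ _ F1 G1), (pderive_mult _ _ _ _ F2 G2),
    (pderive_mult _ _ _ _ F1 G2), (pderive_mult _ _ _ _ F2 G1).
  apply injective_projections; unfold Cplus, Cmult, Re, Im; cbn [fst snd]; ring.
Qed.

Lemma ex_pderiveC_opp : ex_pderiveC d (fun x => - F x)%C w.
Proof.
  destruct HF. split.
  - apply (ex_pderive_ext _ _ (fun x => - Re (F x))); [reflexivity|]. apply ex_pderive_opp; auto.
  - apply (ex_pderive_ext _ _ (fun x => - Im (F x))); [reflexivity|]. apply ex_pderive_opp; auto.
Qed.

Lemma pderiveC_opp : pderiveC d (fun x => - F x)%C w = (- pderiveC d F w)%C.
Proof.
  unfold pderiveC.
  rewrite (pderive_ext _ _ (fun x => - Re (F x))) by reflexivity.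
  rewrite (pderive_ext _ (fun x => Im _) (fun x => - Im (F x))) by reflexivity.
  rewrite !pderive_opp. reflexivity.
Qed.

Hypothesis Hn : F w <> 0%C.

Lemma ex_pderiveC_inv : ex_pderiveC d (fun x => / F x)%C w.
Proof.
  destruct HF as [F1 F2].
  pose proof (ex_pderive_plus _ _ _ _ (ex_pderive_mult _ _ _ _ F1 F1) (ex_pderive_mult _ _ _ _ F2 F2))
    as HN.
  pose proof (ex_pderive_inv _ _ _ HN (Cnorm2_neq_0 _ Hn)) as HI. split.
  - apply (ex_pderive_ext _ _ _ _ (fun x => Re_Cinv (F x))). apply ex_pderive_mult; assumption.
  - apply (ex_pderive_ext _ _ _ _ (fun x => Im_Cinv (F x))).
    apply ex_pderive_mult; [apply ex_pderive_opp|]; assumption.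
Qed.

Lemma pderiveC_inv_mult_sqr : (pderiveC d (fun x => / F x)%C w * (F w * F w))%C = (- pderiveC d F w)%C.
Proof.
  destruct HF as [F1 F2].
  pose proof (ex_pderive_plus _ _ _ _ (ex_pderive_mult _ _ _ _ F1 F1) (ex_pderive_mult _ _ _ _ F2 F2))
    as HN.
  pose proof (Cnorm2_neq_0 _ Hn) as Hnz.
  pose proof (ex_pderive_inv _ _ _ HN Hnz) as HI. unfold pderiveC.
  rewrite (pderive_ext _ _ _ _ (fun x => Re_Cinv (F x))).
  rewrite (pderive_ext _ (fun x => Im _) _ _ (fun x => Im_Cinv (F x))).
  rewrite (pderive_mult _ _ _ _ F1 HI), (pderive_mult _ _ _ _ (ex_pderive_opp _ _ _ F2) HI),
    pderive_opp, (pderive_inv _ _ _ HN Hnz).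
  rewrite (pderive_plus _ _ _ _ (ex_pderive_mult _ _ _ _ F1 F1) (ex_pderive_mult _ _ _ _ F2 F2)).
  rewrite (pderive_mult _ _ _ _ F1 F1), (pderive_mult _ _ _ _ F2 F2).
  set (A := pderive d (fun x => Re (F x)) w). set (B := pderive d (fun x => Im (F x)) w).
  clearbody A B. revert Hnz. destruct (F w) as [a b]. unfold Re, Im. cbn [fst snd]. intro Hnz.
  apply injective_projections; unfold Cplus, Cmult, Copp; cbn [fst snd]; field; exact Hnz.
Qed.

End PointwiseRulesC.

Lemma ex_partialsC_const (c : C) z : ex_partialsC (fun _ => c) z.
Proof. intro; apply ex_pderiveC_const. Qed.

Lemma dzbar_const (c : C) z : dzbar (fun _ => c) z = 0%C.
Proof. rewrite dzbar_pderiveC, !pderiveC_const. ring. Qed.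

Section DzbarRules.
Variables (F G : C -> C) (z : C).
Hypotheses (HF : ex_partialsC F z) (HG : ex_partialsC G z).

Lemma ex_partialsC_plus : ex_partialsC (fun x => F x + G x)%C z.
Proof. intro; apply ex_pderiveC_plus; auto. Qed.
Lemma ex_partialsC_mult : ex_partialsC (fun x => F x * G x)%C z.
Proof. intro; apply ex_pderiveC_mult; auto. Qed.
Lemma ex_partialsC_opp : ex_partialsC (fun x => - F x)%C z.
Proof. intro; apply ex_pderiveC_opp; auto. Qed.

Lemma dzbar_plus : dzbar (fun x => F x + G x)%C z = (dzbar F z + dzbar G z)%C.
Proof. rewrite !dzbar_pderiveC, !pderiveC_plus by auto. ring. Qed.
Lemma dzbar_mult : dzbar (fun x => F x * G x)%C z = (dzbar F z * G z + F z * dzbar G z)%C.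
Proof. rewrite !dzbar_pderiveC, !pderiveC_mult by auto. ring. Qed.
Lemma dzbar_minus : dzbar (fun x => F x - G x)%C z = (dzbar F z - dzbar G z)%C.
Proof.
  rewrite !dzbar_pderiveC. unfold Cminus.
  rewrite !pderiveC_plus, !pderiveC_opp by (auto; apply ex_pderiveC_opp; auto). ring.
Qed.

Hypothesis Hn : F z <> 0%C.

Lemma ex_partialsC_inv : ex_partialsC (fun x => / F x)%C z.
Proof. intro; apply ex_pderiveC_inv; auto. Qed.

Lemma dzbar_inv : dzbar (fun x => / F x)%C z = (- dzbar F z / (F z * F z))%C.
Proof.
  pose proof (pderiveC_inv_mult_sqr true F z (HF true) Hn) as Eu.
  pose proof (pderiveC_inv_mult_sqr false F z (HF false) Hn) as Ev.
  rewrite !dzbar_pderiveC.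
  replace (pderiveC true F z) with (- (pderiveC true (fun x => / F x) z * (F z * F z)))%C
    by (rewrite Eu; ring).
  replace (pderiveC false F z) with (- (pderiveC false (fun x => / F x) z * (F z * F z)))%C
    by (rewrite Ev; ring).
  field. exact Hn.
Qed.
End DzbarRules.

Lemma dzR_components f w : dzR f w = (/ 2 * pderive true f w, - (/ 2 * pderive false f w)).
Proof.
  unfold dzR, dz, duC, dvC, cplx.
  change (du (fun x => Im (RtoC (f x))) w) with (pderive true (fun _ => 0) w).
  change (dv (fun x => Im (RtoC (f x))) w) with (pderive false (fun _ => 0) w).
  rewrite !pderive_const.
  change (du (fun x => Re (RtoC (f x))) w) with (pderive true f w).
  change (dv (fun x => Re (RtoC (f x))) w) with (pderive false f w).
  apply injective_projections; unfold Cmult, Cinv, Cminus, Cplus, Copp, Ci, RtoC; cbn [fst snd];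
    field.
Qed.

Lemma ex_partialsC_C2c Om F w : C2c_on Om F -> Om w -> ex_partialsC F w.
Proof.
  intros [HRe HIm] Hw d. split; apply (C1_ex_pderive Om); auto; apply C2_C1; assumption.
Qed.

Lemma ex_partialsC_dzR Om f w : C2_on Om f -> Om w -> ex_partialsC (dzR f) w.
Proof.
  intros H Hw d. split.
  - apply (ex_pderive_ext _ _ (fun x => / 2 * pderive true f x)).
    { intro x. rewrite dzR_components. reflexivity. }
    apply ex_pderive_scal, (C1_ex_pderive Om), Hw. apply C2_C1_pderive, H.
  - apply (ex_pderive_ext _ _ (fun x => - (/ 2 * pderive false f x))).
    { intro x. rewrite dzR_components. reflexivity. }
    apply ex_pderive_opp, ex_pderive_scal, (C1_ex_pderive Om), Hw. apply C2_C1_pderive, H.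
Qed.

Lemma dzbar_ext_on Om F G z : open Om -> Om z -> (forall y, Om y -> F y = G y) ->
  dzbar F z = dzbar G z.
Proof.
  intros HO Hz H. rewrite !dzbar_pderiveC. unfold pderiveC.
  rewrite !(pderive_ext_on Om HO (fun w => Re (F w)) (fun w => Re (G w))),
          !(pderive_ext_on Om HO (fun w => Im (F w)) (fun w => Im (G w)));
    auto; intros y Hy; rewrite H; auto.
Qed.

Section LinearCombination.
Variables (a : nat -> R) (X : nat -> C -> R).

Lemma ex_pderive_lincomb d w n : (forall j, (j <= n)%nat -> ex_pderive d (X j) w) ->
  ex_pderive d (fun z => sum_f_R0 (fun j => a j * X j z) n) w.
Proof.
  induction n as [|n IH]; intro H; simpl.
  - apply ex_pderive_scal, H. lia.
  - apply ex_pderive_plus; [apply IH; auto|apply ex_pderive_scal, H; lia].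
Qed.

Lemma pderive_lincomb d w n : (forall j, (j <= n)%nat -> ex_pderive d (X j) w) ->
  pderive d (fun z => sum_f_R0 (fun j => a j * X j z) n) w =
  sum_f_R0 (fun j => a j * pderive d (X j) w) n.
Proof.
  induction n as [|n IH]; intro H; simpl.
  - apply pderive_scal.
  - assert (Hn : forall j, (j <= n)%nat -> ex_pderive d (X j) w) by auto.
    rewrite (pderive_plus _ _ _ _ (ex_pderive_lincomb d w n Hn)
               (ex_pderive_scal _ _ _ (a (S n)) (H (S n) (le_n _)))).
    rewrite IH, pderive_scal; auto.
Qed.

Lemma C1_lincomb Om n : open Om -> (forall j, (j <= n)%nat -> C1_on Om (X j)) ->
  C1_on Om (fun z => sum_f_R0 (fun j => a j * X j z) n).
Proof.
  intros HO. induction n as [|n IH]; intro H.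
  - apply (C1_mult Om HO); [apply (C1_const Om HO)|apply H; lia].
  - change (C1_on Om (fun z => sum_f_R0 (fun j => a j * X j z) n + a (S n) * X (S n) z)).
    apply (C1_plus Om HO); [apply IH; auto|].
    apply (C1_mult Om HO); [apply (C1_const Om HO)|apply H; lia].
Qed.

End LinearCombination.

Lemma locally_constant_01 (h : R -> R) :
  (forall t, 0 <= t <= 1 -> exists del, 0 < del /\
     forall s, 0 <= s <= 1 -> Rabs (s - t) < del -> h s = h t) ->
  h 1 = h 0.
Proof.
  intros Hl.
  set (E := fun x => 0 <= x <= 1 /\ forall s, 0 <= s <= x -> h s = h 0).
  assert (E0 : E 0) by (split; [lra|intros s Hs; replace s with 0 by lra; reflexivity]).
  destruct (completeness E) as [m [Hub Hlub]]; [exists 1; intros x [Hx _]; lra|exists 0; exact E0|].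
  assert (Hm : 0 <= m <= 1) by (split; [apply Hub, E0|apply Hlub; intros x [Hx _]; lra]).
  destruct (Hl m Hm) as [del [Hdel Hd]].
  assert (Hx : exists x, E x /\ m - del < x).
  { apply NNPP. intro N. assert (m <= m - del); [|lra].
    apply Hlub. intros x Ex. apply Rnot_lt_le. intro L. apply N. exists x; auto. }
  destruct Hx as [x [[Ex1 Ex2] Lx]].
  assert (Hxm : x <= m) by (apply Hub; split; auto).
  (* [h] is constant on [0, m], and if [m < 1] then also on [0, m + del/2], contradicting [m = sup E]. *)
  assert (Claim : forall s, 0 <= s <= m -> h s = h 0).
  { intros s Hs. destruct (Rle_dec s x) as [Hsx|Hsx]; [apply Ex2; lra|].
    rewrite (Hd s) by (try lra; split_Rabs; lra).
    rewrite <- (Hd x) by (try lra; split_Rabs; lra). apply Ex2; lra. }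
  destruct (Req_dec m 1) as [->|Nm]; [apply Claim; lra|exfalso].
  set (y := Rmin 1 (m + del / 2)).
  pose proof (Rmin_r 1 (m + del / 2)). pose proof (Rmin_l 1 (m + del / 2)).
  assert (Ey : E y).
  { split; [split; [apply Rmin_glb|]; unfold y; lra|].
    intros s Hs. destruct (Rle_dec s m) as [Hsm|Hsm]; [apply Claim; lra|].
    unfold y in Hs. rewrite (Hd s) by (try lra; split_Rabs; lra). apply Claim; lra. }
  pose proof (Hub y Ey). unfold y, Rmin in *. destruct (Rle_dec 1 (m + del / 2)); lra.
Qed.

Section ZeroGradient.
Variables (Om : C -> Prop) (f : C -> R).
Hypotheses (HO : open Om) (Hf : C1_on Om f)
  (Hgrad : forall w, Om w -> pderive true f w = 0 /\ pderive false f w = 0).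

Lemma pderive_zero_locally_constant z : Om z ->
  exists r : posreal, forall w, ball z r w -> f w = f z.
Proof.
  intros Hz. destruct (HO z Hz) as [r Hr]. exists r. intros w Hw.
  apply ball_C in Hw. destruct z as [u v], w as [u' v']. cbn [fst snd] in Hw.
  destruct Hw as [Hw1 Hw2]. change (Rabs (u' - u) < r) in Hw1. change (Rabs (v' - v) < r) in Hw2.
  pose proof (cond_pos r).
  destruct (MVT_axis Om f true (u', v') u u' Hf) as (c & Hc & Hu).
  { intros t Ht. apply Hr, ball_C. pose proof (Rabs_between u u' t Ht). cbn. split; lra. }
  destruct (MVT_axis Om f false (u, v) v v' Hf) as (c' & Hc' & Hv).
  { intros t Ht. apply Hr, ball_C. pose proof (Rabs_between v v' t Ht). cbn.
    rewrite Rminus_diag, Rabs_R0. split; lra. }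
  cbn in Hu, Hv. pose proof (Rabs_between u u' c Hc). pose proof (Rabs_between v v' c' Hc').
  rewrite (proj1 (Hgrad (c, v') ltac:(apply Hr, ball_C; cbn; split; lra))) in Hu.
  rewrite (proj2 (Hgrad (u, c') ltac:(apply Hr, ball_C; cbn; rewrite Rminus_diag, Rabs_R0;
                                         split; lra))) in Hv.
  lra.
Qed.

Lemma pderive_zero_constant : path_connected Om -> forall a b, Om a -> Om b -> f b = f a.
Proof.
  intros Hp a b Ha Hb. destruct (Hp a b Ha Hb) as [gam [Hg [<- <-]]].
  apply (locally_constant_01 (fun t => f (gam t))).
  intros t Ht. destruct (Hg t Ht) as [Hc Hin].
  destruct (pderive_zero_locally_constant _ Hin) as [r Hr].
  destruct (proj1 (filterlim_locally _ _) Hc r) as [del Hdel].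
  exists del. split; [apply cond_pos|]. intros s _ Hst. apply Hr, Hdel, Hst.
Qed.
End ZeroGradient.

(* For real [f], [f_z] determines both partial derivatives. *)
Lemma same_dzR_diff_constant Om f g : open Om -> path_connected Om -> C1_on Om f -> C1_on Om g ->
  (forall w, Om w -> dzR f w = dzR g w) ->
  forall a b, Om a -> Om b -> f b - g b = f a - g a.
Proof.
  intros HO Hp Hf Hg E a b Ha Hb.
  assert (Hfg : C1_on Om (fun x => f x + - g x)) by (apply C1_plus, C1_opp; assumption).
  assert (Hgrad : forall w, Om w -> forall d, pderive d (fun x => f x + - g x) w = 0).
  { intros w Hw d. pose proof (E w Hw) as Ew. rewrite !dzR_components in Ew.
    injection Ew as Eu Ev.
    rewrite (pderive_plus _ _ _ _ (C1_ex_pderive Om f w d Hf Hw)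
               (ex_pderive_opp _ _ _ (C1_ex_pderive Om g w d Hg Hw))), pderive_opp.
    destruct d; lra. }
  pose proof (pderive_zero_constant Om _ HO Hfg (fun w Hw => conj (Hgrad w Hw true) (Hgrad w Hw false))
                Hp a b Ha Hb) as K.
  cbv beta in K. lra.
Qed.

Lemma dzR_lincomb4 (a : nat -> R) (X : nat -> C -> R) w :
  (forall j d, (j <= 3)%nat -> ex_pderive d (X j) w) ->
  dzR (fun z => sum_f_R0 (fun j => a j * X j z) 3) w =
  (RtoC (a 0%nat) * dzR (X 0%nat) w + RtoC (a 1%nat) * dzR (X 1%nat) w +
   RtoC (a 2%nat) * dzR (X 2%nat) w + RtoC (a 3%nat) * dzR (X 3%nat) w)%C.
Proof.
  intros H. rewrite !dzR_components, !pderive_lincomb by auto. simpl.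
  apply injective_projections; unfold Cplus, Cmult, RtoC; cbn [fst snd]; ring.
Qed.

Lemma Ci_pow2 : (Ci ^ 2 = - RtoC 1)%C. Proof. apply injective_projections; simpl; ring. Qed.
Lemma Ci_pow3 : (Ci ^ 3 = - Ci)%C. Proof. apply injective_projections; simpl; ring. Qed.
Lemma Ci_pow4 : (Ci ^ 4 = RtoC 1)%C. Proof. apply injective_projections; simpl; ring. Qed.

(* Side conditions [x <> 0] left by [field] are discharged from a hypothesis [y <> 0] with [x = y]
   up to [ring]. *)
Ltac neq_0_by_ring := repeat split; cbv beta; try assumption;
  match goal with H : ?y <> _ |- ?x <> _ =>
    let E := fresh in intro E; apply H; transitivity x; [ring|exact E] end.
Ltac Cfield := field_simplify; try neq_0_by_ring; rewrite ?Ci_pow2, ?Ci_pow3, ?Ci_pow4;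
  field; try neq_0_by_ring.

Lemma RtoC_2_neq_0 : RtoC 2 <> 0%C.
Proof. intro E. apply (f_equal fst) in E. simpl in E. lra. Qed.

Lemma Xmap_derivative_gauge lam (g p q : C) i :
  g <> 0%C -> (1 + Ci * RtoC lam * g)%C <> 0%C -> (i < 4)%nat ->
  (p * wP (g / (1 + Ci * RtoC lam * g)) i +
   ((/ g + Ci * RtoC lam) * (g * q - Ci * RtoC lam * p)) * wQ (g / (1 + Ci * RtoC lam * g)) i)%C =
  (RtoC (Lmat lam i 0) * (p * wP g 0 + q * wQ g 0) + RtoC (Lmat lam i 1) * (p * wP g 1 + q * wQ g 1) +
   RtoC (Lmat lam i 2) * (p * wP g 2 + q * wQ g 2) + RtoC (Lmat lam i 3) * (p * wP g 3 + q * wQ g 3))%C.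
Proof.
  intros Hg Hh Hi. pose proof RtoC_2_neq_0.
  destruct i as [|[|[|[|i]]]]; [| | | |lia]; unfold Lmat, wP, wQ;
  rewrite ?RtoC_minus, ?RtoC_plus, ?RtoC_opp;
  unfold Rdiv; rewrite ?RtoC_mult, ?RtoC_pow, ?(RtoC_inv 2) by lra;
  try replace (RtoC (-1)) with (- RtoC 1)%C by (apply injective_projections; simpl; ring);
  Cfield.
Qed.

Lemma Cconj_RtoC r : Cconj (RtoC r) = RtoC r.
Proof. apply injective_projections; simpl; ring. Qed.

Lemma Cconj_gauge_denom (lam : R) (g : C) :
  Cconj (1 + Ci * RtoC lam * g)%C = (RtoC 1 + - Ci * RtoC lam * Cconj g)%C.
Proof.
  rewrite Cplus_conj, !Cmult_conj, !Cconj_RtoC.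
  replace (Cconj Ci) with (- Ci)%C by (apply injective_projections; simpl; ring).
  reflexivity.
Qed.

Lemma Cmod2_gauge (lam : R) (g : C) : (1 + Ci * RtoC lam * g)%C <> 0%C ->
  RtoC (Cmod (g / (1 + Ci * RtoC lam * g)) ^ 2) =
  ((g / (1 + Ci * RtoC lam * g)) * (Cconj g / (RtoC 1 + - Ci * RtoC lam * Cconj g)))%C /\
  (RtoC 1 + - Ci * RtoC lam * Cconj g)%C <> 0%C.
Proof.
  intros Hh. split.
  - rewrite Cmod2_conj, Cdiv_conj by exact Hh. rewrite Cconj_gauge_denom. reflexivity.
  - rewrite <- Cconj_gauge_denom. intro E. apply Hh.
    rewrite <- (Cconj_conj (1 + Ci * RtoC lam * g)%C), E.
    apply injective_projections; simpl; ring.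
Qed.

Lemma zzbar_gauge lam (g Qzz Pzz : C) : g <> 0%C -> (1 + Ci * RtoC lam * g)%C <> 0%C ->
  Pzz = (RtoC (Cmod g ^ 2) * Qzz)%C ->
  Pzz = (RtoC (Cmod (g / (1 + Ci * RtoC lam * g)) ^ 2) *
         ((/ g + Ci * RtoC lam) * (g * Qzz - Ci * RtoC lam * Pzz)))%C.
Proof.
  intros Hg Hh E. destruct (Cmod2_gauge lam g Hh) as [-> Hh']. rewrite E, Cmod2_conj.
  revert Hh'. generalize (Cconj g). intros c Hh'.
  Cfield.
Qed.

Lemma nondegenerate_gauge lam (g p q : C) : g <> 0%C -> (1 + Ci * RtoC lam * g)%C <> 0%C ->
  (p - RtoC (Cmod g ^ 2) * q)%C <> 0%C ->
  (p - RtoC (Cmod (g / (1 + Ci * RtoC lam * g)) ^ 2) *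
       ((/ g + Ci * RtoC lam) * (g * q - Ci * RtoC lam * p)))%C <> 0%C.
Proof.
  intros Hg Hh Hn E. apply Hn. destruct (Cmod2_gauge lam g Hh) as [M Hh']. rewrite M in E.
  rewrite Cmod2_conj. revert Hh' E. generalize (Cconj g). intros c Hh' E.
  (* The nondegeneracy expression gets multiplied by the conjugate of [1 + i lam g]. *)
  transitivity ((RtoC 1 + - Ci * RtoC lam * c) *
     (p - g / (1 + Ci * RtoC lam * g) * (c / (RtoC 1 + - Ci * RtoC lam * c)) *
        ((/ g + Ci * RtoC lam) * (g * q - Ci * RtoC lam * p))))%C.
  - Cfield.
  - rewrite E. ring.
Qed.

Lemma Lmat_isometry lam i j : (i < 4)%nat -> (j < 4)%nat ->
  sum_f_R0 (fun k => sum_f_R0 (fun l => Lmat lam k i * eta k l * Lmat lam l j) 3) 3 = eta i j.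
Proof.
  intros Hi Hj.
  do 4 (destruct i as [|i]; [do 4 (destruct j as [|j]; [unfold eta; simpl; field|]); lia|]); lia.
Qed.

Lemma dzbar_mult_holo_l (F G : C -> C) z : ex_partialsC F z -> ex_partialsC G z ->
  dzbar F z = 0%C -> dzbar (fun x => F x * G x)%C z = (F z * dzbar G z)%C.
Proof. intros HF HG H0. rewrite dzbar_mult, H0 by assumption. ring. Qed.

Lemma dzbar_div_holo (F G : C -> C) z : ex_partialsC F z -> ex_partialsC G z -> G z <> 0%C ->
  dzbar F z = 0%C -> dzbar G z = 0%C -> dzbar (fun x => F x / G x)%C z = 0%C.
Proof.
  intros HF HG Hn HF0 HG0. unfold Cdiv.
  rewrite (dzbar_mult_holo_l F (fun x => / G x)%C z HF (ex_partialsC_inv G z HG Hn) HF0).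
  rewrite dzbar_inv, HG0 by assumption. field. exact Hn.
Qed.

Section Gauge.
Variables (Om : C -> Prop) (g : C -> C) (P Q : C -> R) (lam : R) (Qlam : C -> R).
Hypotheses (HO : open Om) (Hdata : WData1 Om g P Q)
  (Hh : forall z, Om z -> (1 + Ci * RtoC lam * g z)%C <> 0%C)
  (HQlz : forall z, Om z -> dzR Qlam z = ((/ g z + Ci * RtoC lam) *
                                          (g z * dzR Q z - Ci * RtoC lam * dzR P z))%C).

Let h := fun w => (1 + Ci * RtoC lam * g w)%C.

Lemma ex_partialsC_g w : Om w -> ex_partialsC g w.
Proof. destruct Hdata as [Hg _]. apply (ex_partialsC_C2c Om g w Hg). Qed.

Lemma ex_partialsC_gauge_denom w : Om w -> ex_partialsC h w.
Proof.
  intros Hw. apply (ex_partialsC_plus (fun _ => 1%C)); [apply ex_partialsC_const|].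
  apply (ex_partialsC_mult (fun _ => Ci * RtoC lam)%C); [apply ex_partialsC_const|].
  apply ex_partialsC_g, Hw.
Qed.

Lemma dzbar_gauge_denom w : Om w -> dzbar h w = 0%C.
Proof.
  intros Hw. destruct Hdata as (_&_&_&_&Hgh&_).
  unfold h. rewrite (dzbar_plus (fun _ => 1%C)), dzbar_const, dzbar_mult_holo_l, Hgh;
    auto using ex_partialsC_const, ex_partialsC_g, dzbar_const.
  - ring.
  - apply (ex_partialsC_mult (fun _ => Ci * RtoC lam)%C); auto using ex_partialsC_const, ex_partialsC_g.
Qed.

Lemma dzbar_gauge w : Om w -> dzbar (fun x => g x / (1 + Ci * RtoC lam * g x))%C w = 0%C.
Proof.
  intros Hw. destruct Hdata as (_&_&_&_&Hgh&_).
  apply (dzbar_div_holo g h); [apply ex_partialsC_g|apply ex_partialsC_gauge_denom|apply Hh|apply Hgh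
    |apply dzbar_gauge_denom]; exact Hw.
Qed.

Lemma dzzbar_gauge w : Om w -> dzzbarR Qlam w =
  ((/ g w + Ci * RtoC lam) * (g w * dzzbarR Q w - Ci * RtoC lam * dzzbarR P w))%C.
Proof.
  intros Hw. destruct Hdata as (Hg&HP&HQ&Hg0&Hgh&_).
  pose proof (ex_partialsC_g w Hw) as Hpg.
  assert (HA : ex_partialsC (fun y => / g y + Ci * RtoC lam)%C w)
    by exact (ex_partialsC_plus _ _ w (ex_partialsC_inv g w Hpg (Hg0 w Hw)) (ex_partialsC_const _ _)).
  assert (HA0 : dzbar (fun y => / g y + Ci * RtoC lam)%C w = 0%C).
  { rewrite (dzbar_plus _ _ w (ex_partialsC_inv g w Hpg (Hg0 w Hw)) (ex_partialsC_const _ _)).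
    rewrite (dzbar_inv g w Hpg (Hg0 w Hw)), dzbar_const, Hgh by exact Hw. field. auto. }
  pose proof (ex_partialsC_dzR Om Q w HQ Hw) as HdQ. pose proof (ex_partialsC_dzR Om P w HP Hw) as HdP.
  pose proof (ex_partialsC_mult g (dzR Q) w Hpg HdQ) as HgQ.
  pose proof (ex_partialsC_mult (fun _ => Ci * RtoC lam)%C (dzR P) w (ex_partialsC_const _ _) HdP)
    as HlP.
  unfold dzzbarR. rewrite (dzbar_ext_on Om _ _ w HO Hw HQlz).
  assert (HB : ex_partialsC (fun y => g y * dzR Q y - Ci * RtoC lam * dzR P y)%C w)
    by exact (ex_partialsC_plus _ _ w HgQ (ex_partialsC_opp _ w HlP)).
  rewrite (dzbar_mult_holo_l _ _ w HA HB HA0).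
  rewrite (dzbar_minus _ _ w HgQ HlP), (dzbar_mult_holo_l g (dzR Q) w Hpg HdQ (Hgh w Hw)),
    (dzbar_mult_holo_l _ (dzR P) w (ex_partialsC_const _ _) HdP (dzbar_const _ _)).
  reflexivity.
Qed.

Lemma WData1_gauge : C2_on Om Qlam ->
  WData1 Om (fun w => (g w / (1 + Ci * RtoC lam * g w))%C) P Qlam.
Proof.
  intros HQl. destruct Hdata as (Hg&HP&HQ&Hg0&Hgh&Hzz&Hnd).
  split; [|split; [exact HP|split; [exact HQl|split; [|split; [exact dzbar_gauge|split]]]]].
  - unfold Cdiv. apply (C2c_mult Om HO); [exact Hg|].
    apply (C2c_inv Om HO h); [|exact Hh].
    apply (C2c_plus Om HO (fun _ => 1%C)); [apply (C2c_const Om HO)|].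
    apply (C2c_mult Om HO (fun _ => Ci * RtoC lam)%C); [apply (C2c_const Om HO)|exact Hg].
  - intros w Hw E. apply (Hg0 w Hw).
    replace (g w) with ((g w / h w) * h w)%C by (field; apply Hh, Hw).
    cbv beta in E. unfold h. rewrite E. ring.
  - intros w Hw. cbv beta. rewrite dzzbar_gauge by exact Hw.
    rewrite <- (zzbar_gauge lam (g w) (dzzbarR Q w) (dzzbarR P w)); auto.
  - intros w Hw. cbv beta. rewrite HQlz by exact Hw. apply nondegenerate_gauge; auto.
Qed.

Lemma Xmap_gauge (X Y : nat -> C -> R) : path_connected Om -> (exists z, Om z) ->
  IsXmap Om g P Q X -> IsXmap Om (fun w => (g w / (1 + Ci * RtoC lam * g w))%C) P Qlam Y ->
  exists c : nat -> R, forall z i, Om z -> (i < 4)%nat -> Y i z = applyL lam X i z + c i.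
Proof.
  intros Hpc [z0 Hz0] [HXc HXz] [HYc HYz]. destruct Hdata as (_&_&_&Hg0&_).
  exists (fun i => Y i z0 - applyL lam X i z0). intros z i Hz Hi.
  assert (HL : C1_on Om (applyL lam X i))
    by (apply (C1_lincomb (Lmat lam i) X Om 3 HO); intros; apply HXc; lia).
  assert (Hdz : forall w, Om w -> dzR (Y i) w = dzR (applyL lam X i) w).
  { intros w Hw. unfold applyL.
    rewrite dzR_lincomb4 by (intros; apply (C1_ex_pderive Om); [apply HXc; lia|exact Hw]).
    rewrite (HYz w i Hw Hi). cbv beta. rewrite HQlz, Xmap_derivative_gauge, !HXz by (auto; lia).
    reflexivity. }
  pose proof (same_dzR_diff_constant Om (Y i) (applyL lam X i) HO Hpc (HYc i Hi) HL Hdz z0 z Hz0 Hz).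
  lra.
Qed.

End Gauge.

Theorem mainTheorem8
  (Om : C -> Prop) (g : C -> C) (P Q : C -> R) (lam : R) (Qlam : C -> R)
  (X Y : nat -> C -> R) :
  simply_connected_domain Om ->
  WData1 Om g P Q ->
  (forall z, Om z -> (1 + Ci * RtoC lam * g z)%C <> 0%C) ->
  C2_on Om Qlam ->
  (forall z, Om z ->
     dzR Qlam z = ((/ g z + Ci * RtoC lam) *
                   (g z * dzR Q z - Ci * RtoC lam * dzR P z))%C) ->
  IsXmap Om g P Q X ->
  IsXmap Om (fun w => (g w / (1 + Ci * RtoC lam * g w))%C) P Qlam Y ->
  WData1 Om (fun w => (g w / (1 + Ci * RtoC lam * g w))%C) P Qlam /\
  (exists c : nat -> R, forall z i, Om z -> (i < 4)%nat ->
     Y i z = applyL lam X i z + c i) /\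
  (forall i j, (i < 4)%nat -> (j < 4)%nat ->
     sum_f_R0 (fun k => sum_f_R0 (fun l =>
        Lmat lam k i * eta k l * Lmat lam l j) 3) 3 = eta i j).
Proof.
  intros (HO & Hne & Hpc & _) Hdata Hh HQl HQlz HX HY.
  split; [|split].
  - apply (WData1_gauge Om g P Q lam Qlam); assumption.
  - apply (Xmap_gauge Om g P Q lam Qlam); assumption.
  - exact (Lmat_isometry lam).
Qed.
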